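(* Let $N\ge 3$ and let $(a_i)_{i\in\mathbb{Z}_{2N}}$ and $(\bar a_i)_{i\in\mathbb{Z}_{2N}}$ be positive real numbers (indices taken modulo $2N$) satisfying, for all $n\in\mathbb{Z}_N$, $$\bar a_{2n-1}+\bar a_{2n}=a_{2n}+a_{2n+1},\qquad \bar a_{2n}\bar a_{2n+1}=a_{2n+1}a_{2n+2}.$$ For $1\le k\le N$ define $$h_k(a)=\sum_{\substack{1\le i_1\triangleleft i_2\triangleleft\cdots\triangleleft i_k\le 2N\\ (i_1,i_k)\neq(1,2N)}} a_{i_1}a_{i_2}\cdots a_{i_k},$$ and $h_{N+1}(a)=\prod_{i=1}^{2N}a_i$. Then $h_k(\bar a)=h_k(a)$ for all $1\le k\le N+1$.
   Context: For integers $i,j$, $i\triangleleft j$ means $i+1<j$. The sum in $h_k$ runs over index tuples $1\le i_1<\dots<i_k\le 2N$ with consecutive indices differing by at least $2$, excluding tuples with $i_1=1$ and $i_k=2N$ simultaneously. The displayed equations are the evolution equations of the discrete periodic Toda lattice, with $a_i=a_i^t$, $\bar a_i=a_i^{t+1}$. *)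

From HB Require Import structures.
From mathcomp Require Import all_boot all_order all_algebra.
Set Implicit Arguments. Unset Strict Implicit. Unset Printing Implicit Defensive.
Import Order.TTheory GRing.Theory Num.Theory.
Local Open Scope ring_scope.

(* Sequences indexed by Z_{2N} are represented as 2N-periodic maps nat -> R;
   a i is a_i (index i read modulo 2N). *)
Definition periodic (R : Type) (N : nat) (a : nat -> R) : Prop :=
  forall i : nat, a (i + 2 * N)%N = a i.

(* Index tuple i_1 < ... < i_k in {1..2N} represented 0-based:
   an ordinal j : 'I_(2N) stands for the index j+1.
   Condition i_1 <| i_2 <| ... <| i_k (i.e. i_j + 1 < i_{j+1}),
   and (i_1, i_k) <> (1, 2N). *)
Definition admissible (N k : nat) (t : k.-tuple 'I_(2 * N)) : bool :=
  let s := map (@nat_of_ord _) t in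
  sorted (fun x y : nat => (x.+1 < y)%N) s &&
  ~~ ((nth 0%N s 0 == 0%N) && (last 0%N s == (2 * N).-1)).

Definition hsum (R : numDomainType) (N k : nat) (a : nat -> R) : R :=
  \sum_(t : k.-tuple 'I_(2 * N) | admissible t) \prod_(j <- t) a (nat_of_ord j).+1.

Definition h (R : numDomainType) (N k : nat) (a : nat -> R) : R :=
  if k == N.+1 then \prod_(i < 2 * N) a i.+1 else hsum N k a.

From HB Require Import structures.
From mathcomp Require Import all_boot all_order all_algebra.
From mathcomp Require Import ring zify.
Import Order.TTheory GRing.Theory Num.Theory.
Local Open Scope ring_scope.

(* The proof is the Lax-pair argument.  Over the polynomial ring in X, let
   T(u) = [[1, 1], [u X, 0]] and let G_a = tr (T(a_1) T(a_2) ... T(a_2N)) be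
   the generating polynomial of a 2N-periodic sequence a.
   - Invariance.  The gauge matrices D(d) = [[1, 0], [d X, 1]] intertwine one
     time step on each pair of sites, T(b_1) T(b_2) D(c_2 - b_2) =
     D(b_1 - c_1) T(c_1) T(c_2) whenever b_1 b_2 = c_1 c_2; telescoping these
     relations around the cycle makes the monodromy matrix of abar similar to
     that of a, hence G_abar = G_a.
   - Expansion.  Writing the trace of a product of matrices as a sum over
     closed paths of states, the path weight of T vanishes unless no two
     cyclically consecutive sites are occupied, so the coefficient of X^k in
     G_a is the sum, over cyclically independent k-subsets A of
     {0, ..., 2N-1}, of the products of the a_{i+1} for i in A.
   - Combinatorics.  The admissible index tuples defining h_k are exactly the
     increasing enumerations of these subsets, so h_k(a) is that coefficient.
   The remaining quantity h_{N+1}, the product of all a_i, is conserved by the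
   product half of the evolution equations alone. *)

Section TransferMatrices.
Context {S : comPzRingType} (x : S).

Definition transfer (u : S) : 'M[S]_2 :=
  \matrix_(i, j) if i == ord0 then 1 else if j == ord0 then u * x else 0.

Definition gauge (d : S) : 'M[S]_2 :=
  \matrix_(i, j) if i == j then 1 else if j == ord0 then d * x else 0.

Lemma transfer_exchange (b1 b2 c1 c2 : S) : b1 * b2 = c1 * c2 ->
  transfer b1 * transfer b2 * gauge (c2 - b2) =
  gauge (b1 - c1) * (transfer c1 * transfer c2).
Proof.
move=> eq_prod; apply/matrixP => i j; rewrite -!mulmxE !mxE.
rewrite !big_ord_recl !big_ord0 !mxE !big_ord_recl !big_ord0 !mxE.
case: i => [[|[|i]] ?] //; case: j => [[|[|j]] ?] //=; rewrite ?mxE /=; try ring.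
apply/eqP; rewrite -subr_eq0; apply/eqP.
by transitivity (x * x * (c1 * c2 - b1 * b2)); [ring | rewrite eq_prod subrr mulr0].
Qed.

Lemma gaugeN (d : S) : gauge d * gauge (- d) = 1.
Proof.
apply/matrixP => i j; rewrite -mulmxE !mxE !big_ord_recl big_ord0 !mxE.
by case: i => [[|[|i]] ?] //; case: j => [[|[|j]] ?] //=; ring.
Qed.

Lemma gaugeNK (d : S) : gauge (- d) * gauge d = 1.
Proof. by rewrite -{2}(opprK d) gaugeN. Qed.

End TransferMatrices.

Section Similarity.
Context {S : comPzRingType} {n : nat}.
Implicit Types A B E : nat -> 'M[S]_n.

Lemma prod_intertwine A B E m :
  (forall j, (j < m)%N -> A j * E j.+1 = E j * B j) ->
  (\prod_(j < m) A j) * E m = E 0%N * \prod_(j < m) B j.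
Proof.
elim: m => [|m IH] AB; first by rewrite !big_ord0 mul1r mulr1.
rewrite !big_ord_recr /= -mulrA AB // mulrA IH ?mulrA // => j lt_jm.
exact/AB/ltnW.
Qed.

Lemma mxtrace_similar {X Y E E' : 'M[S]_n} :
  X * E = E * Y -> E * E' = 1 -> E' * E = 1 -> \tr X = \tr Y.
Proof.
move=> XE EE' E'E.
have -> : X = E * (Y * E') by rewrite mulrA -XE -mulrA EE' mulr1.
by rewrite -!mulmxE mxtrace_mulC -mulmxA !mulmxE E'E mulr1.
Qed.

Lemma mxtrace_prod_rotate (F : nat -> 'M[S]_n) m : F 0%N = F m.+1 ->
  \tr (\prod_(i < m.+1) F i) = \tr (\prod_(i < m.+1) F i.+1).
Proof.
move=> F0; rewrite big_ord_recl big_ord_recr /= -!mulmxE mxtrace_mulC F0.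
by congr (\tr (_ *m _)); apply: eq_bigr => i _.
Qed.

End Similarity.

Lemma prod_pairs (R : pzSemiRingType) (F : nat -> R) m :
  \prod_(i < 2 * m) F i = \prod_(j < m) (F (2 * j)%N * F (2 * j).+1).
Proof.
elim: m => [|m IH]; first by rewrite muln0 !big_ord0.
by rewrite mulnSr addn2 !big_ord_recr /= IH mulrA.
Qed.

Lemma val_ordS (K : nat) (i : 'I_K) :
  ordS i = (if (i.+1 < K)%N then i.+1 else 0)%N :> nat.
Proof.
rewrite /=; case: ltnP => [lt_iK | le_Ki]; first by rewrite modn_small.
have -> : i.+1 = K by apply/eqP; rewrite eqn_leq le_Ki ltn_ord.
exact: modnn.
Qed.

Lemma periodic_ordS {T : Type} {N : nat} {a : nat -> T} :
  periodic N a -> forall i : 'I_(2 * N), a (ordS i) = a i.+1.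
Proof.
move=> pa i; rewrite val_ordS; case: ltnP => // le_Ki.
have -> : i.+1 = (2 * N)%N by apply/eqP; rewrite eqn_leq le_Ki ltn_ord.
by rewrite -[(2 * N)%N]add0n pa.
Qed.

Definition transfer_trace {R : comNzRingType} (N : nat) (a : nat -> R) : {poly R} :=
  \tr (\prod_(i < 2 * N) transfer 'X (a i.+1)%:P).

Section Invariance.
Variables (R : comNzRingType) (N : nat) (a abar : nat -> R).
Hypotheses (N_gt0 : (0 < N)%N) (pa : periodic N a) (pb : periodic N abar).
Hypothesis evolution : forall n : nat, (n < N)%N ->
  abar (2 * n + 2 * N - 1)%N + abar (2 * n)%N = a (2 * n)%N + a (2 * n + 1)%N /\
  abar (2 * n)%N * abar (2 * n + 1)%N = a (2 * n + 1)%N * a (2 * n + 2)%N.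

Let T (u : R) : 'M[{poly R}]_2 := transfer 'X u%:P.

(* The gauge attached to the boundary between the pairs j-1 and j. *)
Let E (j : nat) : 'M[{poly R}]_2 :=
  gauge 'X (a (2 * j)%N - abar (2 * j + 2 * N - 1)%N)%:P.

(* One time step on the j-th pair of sites: the evolution equations at n = j
   are exactly the hypotheses of transfer_exchange with gauges E j, E j+1. *)
Lemma lax_step j : (j < N)%N ->
  T (abar (2 * j)%N) * T (abar (2 * j).+1) * E j.+1 =
  E j * (T (a (2 * j).+1) * T (a (2 * j).+2)).
Proof.
move=> lt_jN; have [sum_rel prod_rel] := evolution j lt_jN.
rewrite addn1 addn2 in sum_rel prod_rel.
have -> : E j.+1 = gauge 'X ((a (2 * j).+2)%:P - (abar (2 * j).+1)%:P).
  rewrite /E -rmorphB -(pb (2 * j).+1).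
  by congr (gauge _ (a _ - abar _)%:P); lia.
have -> : E j = gauge 'X ((abar (2 * j))%:P - (a (2 * j).+1)%:P).
  rewrite /E -rmorphB; congr (gauge _ _%:P).
  have -> : a (2 * j)%N = abar (2 * j + 2 * N - 1)%N + abar (2 * j)%N - a (2 * j).+1.
    by rewrite sum_rel addrK.
  ring.
by apply: transfer_exchange; rewrite -!rmorphM prod_rel.
Qed.

(* Rotating the product for abar by one site aligns its pairs with the
   relations; by periodicity E N = E 0, so the two monodromies are similar. *)
Lemma transfer_trace_invariant : transfer_trace N abar = transfer_trace N a.
Proof.
have K_eq : (2 * N = (2 * N).-1.+1)%N by lia.
have -> : transfer_trace N abar = \tr (\prod_(i < 2 * N) T (abar i)).
  rewrite /transfer_trace K_eq; symmetry.
  apply: (@mxtrace_prod_rotate _ _ (fun i => T (abar i))).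
  by rewrite -K_eq -[(2 * N)%N]add0n pb.
rewrite /transfer_trace (prod_pairs _ (fun i => T (abar i))) (prod_pairs _ (fun i => T (a i.+1))).
have EN : E N = E 0%N.
  rewrite /E muln0 add0n.
  have -> : a (2 * N)%N = a 0%N by rewrite -[(2 * N)%N]add0n pa.
  have -> : (2 * N + 2 * N - 1 = (2 * N - 1) + 2 * N)%N by lia.
  by rewrite pb.
pose d0 := (a 0%N - abar (2 * N - 1)%N)%:P.
have E0 : E 0%N = gauge 'X d0 by rewrite /E muln0 add0n.
apply: (mxtrace_similar _ (gaugeN 'X d0) (gaugeNK 'X d0)).
by rewrite -E0 -{1}EN; apply: (prod_intertwine _ _ _ _ lax_step).
Qed.

End Invariance.

(* A path of length m <= K is encoded by a
   function f : 'I_K -> 'I_n.+1 whose values at positions >= m are zero;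
   its vertices are f 0, ..., f (m-1) followed by a prescribed endpoint. *)
Section CyclicPaths.
Context {S : comPzRingType} {n K : nat}.
Implicit Types (f : {ffun 'I_K -> 'I_n.+1}) (M : nat -> 'M[S]_n.+1).

Definition state_at f (j : nat) : 'I_n.+1 :=
  if insub j is Some i then f i else ord0.

Definition path_vertex f (m : nat) (t : 'I_n.+1) (j : nat) : 'I_n.+1 :=
  if (j < m)%N then state_at f j else t.

Definition unused_from f (m : nat) : bool :=
  [forall i : 'I_K, (m <= i)%N ==> (f i == ord0)].

Definition set_state f (i : 'I_K) (u : 'I_n.+1) : {ffun 'I_K -> 'I_n.+1} :=
  [ffun j => if j == i then u else f j].

Lemma state_at_ord f (i : 'I_K) : state_at f i = f i.
Proof. by rewrite /state_at valK. Qed.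

(* Extending a path by one step: storing its old endpoint u at position m. *)
Lemma path_vertex_set f m (lt_mK : (m < K)%N) u t j : (j <= m)%N ->
  path_vertex (set_state f (Ordinal lt_mK) u) m.+1 t j = path_vertex f m u j.
Proof.
move=> le_jm; rewrite /path_vertex /state_at ltnS le_jm.
case: (ltnP j m) => [lt_jm | le_mj].
  case: insubP => [i _ i_j|]; last by rewrite (ltn_trans lt_jm lt_mK).
  by rewrite ffunE -(inj_eq val_inj) /= i_j (ltn_eqF lt_jm).
have -> : j = m by apply/eqP; rewrite eqn_leq le_jm le_mj.
by rewrite insubT /= ffunE eqxx.
Qed.

Lemma sum_unused_from_step (F : {ffun 'I_K -> 'I_n.+1} -> S) m (lt_mK : (m < K)%N) :
  \sum_(f | unused_from f m.+1) F f =
  \sum_(u < n.+1) \sum_(f | unused_from f m) F (set_state f (Ordinal lt_mK) u).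
Proof.
set mo := Ordinal lt_mK.
rewrite (partition_big (fun f => f mo) predT) //=; apply: eq_bigr => u _.
pose reset f := set_state f mo ord0.
rewrite [LHS](reindex_onto (fun f => set_state f mo u) reset) => [|g /andP[_ /eqP gu]]; last first.
  by apply/ffunP => i; rewrite !ffunE; case: eqP => // ->.
apply: eq_bigl => f; apply/idP/idP.
  move=> /andP[/andP[/forallP free_f _] /eqP f_mo]; apply/forallP => i; apply/implyP => le_mi.
  case: (i =P mo) => [->|ne_imo]; first by rewrite -f_mo ffunE eqxx.
  have lt_mi : (m < i)%N.
    by rewrite ltn_neqAle le_mi andbT; apply/eqP => e; apply: ne_imo; apply: val_inj.
  by have := implyP (free_f i) lt_mi; rewrite ffunE (introF eqP ne_imo).
move/forallP => free_f; rewrite -andbA; apply/and3P; split.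
- apply/forallP => i; apply/implyP => lt_mi; rewrite ffunE ifF; last first.
    by apply/eqP => e; move: lt_mi; rewrite e ltnn.
  exact/(implyP (free_f i))/ltnW.
- by rewrite ffunE eqxx.
- apply/eqP/ffunP => i; rewrite !ffunE; case: eqP => // ->.
  by apply/esym/eqP; apply: (implyP (free_f mo)).
Qed.

Lemma prod_entry_paths M m : (m <= K)%N -> forall s t,
  (\prod_(i < m) M i) s t =
  \sum_(f | unused_from f m)
     ((path_vertex f m t 0%N == s)%:R *
      \prod_(i < m) M i (path_vertex f m t i) (path_vertex f m t i.+1)).
Proof.
elim: m => [|m IH] le_mK s t.
  rewrite big_ord0 (big_pred1 [ffun => ord0]) => [|f].
    by rewrite big_ord0 mulr1 /path_vertex /= mxE eq_sym.
  apply/forallP/eqP => [free_f|->]; last by move=> i; rewrite ffunE.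
  by apply/ffunP => i; rewrite ffunE; apply/eqP; have := free_f i.
rewrite (sum_unused_from_step _ _ le_mK) big_ord_recr /= -mulmxE mxE.
apply: eq_bigr => u _; rewrite IH ?(ltnW le_mK) // big_distrl /=.
apply: eq_bigr => f _; rewrite big_ord_recr /= path_vertex_set //.
rewrite (path_vertex_set _ _ _ _ _ _ (leqnn m)) [path_vertex _ m.+1 t m.+1]/path_vertex ltnn.
rewrite [path_vertex f m u m]/path_vertex ltnn -mulrA; congr (_ * (_ * _)).
apply: eq_bigr => i _.
rewrite !(path_vertex_set _ _ _ _ _ _ (ltn_ord i)).
by rewrite (path_vertex_set _ _ _ _ _ _ (ltnW (ltn_ord i))).
Qed.

Lemma mxtrace_prod_cycles M : (0 < K)%N ->
  \tr (\prod_(i < K) M i) =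
  \sum_(f : {ffun 'I_K -> 'I_n.+1}) \prod_(i < K) M i (f i) (f (ordS i)).
Proof.
move=> K_gt0; rewrite /mxtrace.
under eq_bigr do rewrite prod_entry_paths //.
rewrite exchange_big /=; apply: eq_big => [f|f _].
  by apply/forallP => i; apply/implyP; rewrite leqNgt ltn_ord.
have start s : path_vertex f K s 0%N = state_at f 0%N by rewrite /path_vertex K_gt0.
under eq_bigr do rewrite start.
rewrite (bigD1 (state_at f 0%N)) //= eqxx mul1r [X in _ + X]big1 ?addr0 => [|s ne_s]; last first.
  by rewrite eq_sym (negbTE ne_s) mul0r.
apply: eq_bigr => i _; rewrite /path_vertex ltn_ord state_at_ord.
by rewrite -(state_at_ord f (ordS i)) val_ordS; case: ifP.
Qed.

End CyclicPaths.

Section IndependentSets.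
Context {K : nat}.
Implicit Types (A : {set 'I_K}) (f : {ffun 'I_K -> 'I_2}).

Definition cyclically_independent A : bool := [forall i in A, ordS i \notin A].

Definition occupied f : {set 'I_K} := [set i | f i != ord0].

Definition indicator A : {ffun 'I_K -> 'I_2} :=
  [ffun i => if i \in A then ord_max else ord0].

Lemma indicatorK : cancel indicator occupied.
Proof. by move=> A; apply/setP => i; rewrite !inE ffunE; case: (i \in A). Qed.

Lemma occupiedK : cancel occupied indicator.
Proof.
move=> f; apply/ffunP => i; rewrite !ffunE inE.
by case: (f i) => [[|[|j]] lt_j2] //; apply: val_inj.
Qed.

Lemma sum_occupied (V : nmodType) (P : pred {set 'I_K}) (F : {set 'I_K} -> V) :
  \sum_(f | P (occupied f)) F (occupied f) = \sum_(A | P A) F A.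
Proof.
rewrite (reindex indicator); last exact/onW_bij/(Bijective indicatorK occupiedK).
by apply: eq_big => [A|A _]; rewrite indicatorK.
Qed.

Lemma transfer_cycle {S : comPzRingType} (x : S) (u : nat -> S) f :
  \prod_(i < K) transfer x (u i) (f i) (f (ordS i)) =
  if cyclically_independent (occupied f)
  then (\prod_(i in occupied f) u i) * x ^+ #|occupied f| else 0.
Proof.
case: ifP => [indep | /negbT/forall_inPn[i i_occ]]; last first.
  rewrite negbK => Si_occ; rewrite (bigD1 i) //= mxE.
  by move: i_occ Si_occ; rewrite !inE => /negbTE-> /negbTE->; rewrite mul0r.
rewrite -prodr_const -big_split /= [RHS]big_mkcond; apply: eq_bigr => i _.
rewrite mxE inE; case: eqP => [//|/eqP f_i].
by have := forall_inP indep i; rewrite !inE f_i negbK => /(_ isT)/eqP->.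
Qed.

End IndependentSets.

Lemma coef_transfer_trace (R : comNzRingType) (N : nat) (a : nat -> R) (k : nat) :
  (0 < N)%N ->
  (transfer_trace N a)`_k =
  \sum_(A : {set 'I_(2 * N)} | cyclically_independent A && (#|A| == k))
     \prod_(i in A) a i.+1.
Proof.
move=> N_gt0; rewrite /transfer_trace.
rewrite (mxtrace_prod_cycles (fun i => transfer 'X (a i.+1)%:P)) ?muln_gt0 //.
rewrite coef_sum -sum_occupied [RHS]big_mkcond; apply: eq_bigr => f _.
rewrite (transfer_cycle 'X (fun i => (a i.+1)%:P)); case: ifP => //= _; last by rewrite coef0.
by rewrite -rmorph_prod coefCM coefXn eq_sym; case: eqP; rewrite ?mulr1 ?mulr0.
Qed.

Section SortedNatSeq.
Local Open Scope nat_scope.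
Implicit Type s : seq nat.

Definition gap (x y : nat) : bool := x.+1 < y.

Lemma gap_trans : transitive gap.
Proof. by rewrite /gap => y x z; lia. Qed.

Lemma sorted_gap_no_succ s x : sorted gap s -> x \in s -> x.+1 \notin s.
Proof.
elim: s => [|b s IH] //= sorted_bs; rewrite !inE.
move: sorted_bs; rewrite (path_sortedE gap_trans) => /andP[/allP gap_b sorted_s].
case/orP=> [/eqP->|x_s]; rewrite negb_or; apply/andP; split.
- by rewrite /gap; lia.
- by apply/negP => b1_s; have := gap_b _ b1_s; rewrite /gap ltnn.
- by apply/negP => /eqP x1b; have := gap_b _ x_s; rewrite /gap -x1b; lia.
- exact: IH.
Qed.

Lemma sorted_gap_of_ltn s :
  sorted ltn s -> {in s, forall x, x.+1 \notin s} -> sorted gap s.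
Proof.
elim: s => [|b s IH] //= sorted_bs no_succ.
move: sorted_bs; rewrite (path_sortedE ltn_trans) => /andP[/allP lt_b sorted_s].
rewrite (path_sortedE gap_trans); apply/andP; split.
  apply/allP => y y_s; rewrite /gap ltn_neqAle lt_b // andbT.
  by apply: contraTneq (no_succ b (mem_head b s)) => ->; rewrite inE y_s orbT.
apply: IH => // x x_s; apply: contraNN (no_succ x _) => [x1_s|]; rewrite inE ?x1_s ?x_s orbT //.
Qed.

Lemma sorted_gapE s : sorted gap s = sorted ltn s && all (fun x => x.+1 \notin s) s.
Proof.
apply/idP/andP => [gap_s | [ltn_s /allP no_succ]]; last exact: sorted_gap_of_ltn.
split; first by apply: sub_sorted gap_s => x y; rewrite /gap /=; lia.
by apply/allP => x; apply: sorted_gap_no_succ.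
Qed.

Lemma sorted_head_zero b s : sorted ltn (b :: s) -> (0 \in b :: s) = (b == 0).
Proof.
rewrite /= inE eq_sym (path_sortedE ltn_trans) => /andP[/allP lt_b _].
by case: eqP => //= _; apply/negP => /lt_b.
Qed.

Lemma sorted_last_max K b s : sorted ltn (b :: s) -> all (fun x => x < K) (b :: s) ->
  (K.-1 \in b :: s) = (last b s == K.-1).
Proof.
elim: s b => [|c s IH] b /=; first by rewrite inE.
move=> /andP[lt_bc sorted_cs] /and3P[_ lt_cK all_s].
rewrite inE -IH //=; last by rewrite lt_cK.
by case: eqP => // Kb; lia.
Qed.

Lemma sorted_ends K s : 1 < K -> sorted ltn s -> all (fun x => x < K) s ->
  (nth 0 s 0 == 0) && (last 0 s == K.-1) = (0 \in s) && (K.-1 \in s).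
Proof.
case: s => [|b s] lt_1K sorted_s all_s; first by rewrite eqxx /=; apply/eqP; lia.
by rewrite sorted_head_zero // (sorted_last_max _ _ _ sorted_s all_s).
Qed.

End SortedNatSeq.

Lemma cyclically_independent_seq (K : nat) (t : seq 'I_K) :
  cyclically_independent [set x in t] =
  all (fun x => x.+1 \notin map (@nat_of_ord K) t) (map (@nat_of_ord K) t) &&
  ~~ ((0 \in map (@nat_of_ord K) t) && (K.-1 \in map (@nat_of_ord K) t))%N.
Proof.
have last_ord (i : 'I_K) : (K <= i.+1)%N -> i = K.-1 :> nat.
  by move=> le_Ki; have := ltn_ord i; lia.
apply/forall_inP/andP => [indep | [/allP no_succ no_wrap] i].
  split.
    apply/allP => _ /mapP[i i_t ->]; apply/negP => /mapP[j j_t j_eq].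
    have := indep i; rewrite !inE i_t => /(_ isT); apply/negP/negPn.
    suff -> : ordS i = j by [].
    by apply: ord_inj; rewrite val_ordS j_eq ltn_ord.
  apply/negP => /andP[/mapP[j j_t j0] /mapP[i i_t iK]].
  have := indep i; rewrite !inE i_t => /(_ isT); apply/negP/negPn.
  suff -> : ordS i = j by [].
  have K_gt0 : (0 < K)%N by apply: leq_ltn_trans (ltn_ord i).
  by apply: ord_inj; rewrite val_ordS -iK prednK // ltnn.
rewrite !inE => i_t; apply/negP => Si_t; have := map_f (@nat_of_ord K) Si_t.
rewrite val_ordS; case: ltnP => [_ Si | /last_ord iK S0].
  by have := no_succ _ (map_f (@nat_of_ord K) i_t); rewrite Si.
by apply: (negP no_wrap); rewrite S0 -iK map_f.
Qed.

Lemma admissibleE {N k : nat} (t : k.-tuple 'I_(2 * N)) : (0 < N)%N ->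
  admissible t = sorted ltn (map (@nat_of_ord _) t) && cyclically_independent [set x in t].
Proof.
move=> N_gt0; rewrite /admissible -/(gap) sorted_gapE cyclically_independent_seq.
case: (boolP (sorted ltn _)) => //= sorted_t; rewrite sorted_ends //; first lia.
by rewrite all_map; apply/allP => i _ /=.
Qed.

Lemma sorted_enum_ord (K : nat) (A : {set 'I_K}) :
  sorted ltn (map (@nat_of_ord K) (enum A)).
Proof.
rewrite /enum_mem -enumT /=.
apply: (subseq_sorted ltn_trans (map_subseq _ (filter_subseq _ _))).
by rewrite val_enum_ord iota_ltn_sorted.
Qed.

Lemma sorted_tuple_uniq {K k : nat} {t : k.-tuple 'I_K} :
  sorted ltn (map (@nat_of_ord K) t) -> uniq t.
Proof. by move=> sorted_t; rewrite -(map_inj_uniq (@ord_inj K)) (sorted_uniq ltn_trans ltnn). Qed.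

Lemma sum_sorted_tuples (V : nmodType) (K k : nat) (x0 : 'I_K)
    (P : pred {set 'I_K}) (F : {set 'I_K} -> V) :
  \sum_(t : k.-tuple 'I_K | sorted ltn (map (@nat_of_ord K) t) && P [set x in t])
     F [set x in t] =
  \sum_(A : {set 'I_K} | (#|A| == k) && P A) F A.
Proof.
pose listing (A : {set 'I_K}) : k.-tuple 'I_K := [tuple of mkseq (nth x0 (enum A)) k].
have listingE (A : {set 'I_K}) : #|A| = k -> val (listing A) = enum A.
  by move=> card_A; rewrite /= -[in RHS](mkseq_nth x0 (enum A)) -cardE card_A.
rewrite [RHS](reindex_onto (fun t : k.-tuple 'I_K => [set x in t]) listing); last first.
  by move=> A /andP[/eqP card_A _]; apply/setP => x; rewrite inE memtE listingE // mem_enum.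
apply: eq_bigl => t; rewrite andbAC; congr (_ && _).
apply/idP/andP => [sorted_t | [/eqP card_t /eqP listing_t]]; last first.
  by rewrite -listing_t listingE ?sorted_enum_ord.
have uniq_t := sorted_tuple_uniq sorted_t.
have card_t : #|[set x in t]| = k.
  by rewrite cardsE (card_uniqP uniq_t) size_tuple.
split; first by rewrite card_t.
apply/eqP/val_inj/(inj_map (@ord_inj K)); rewrite listingE //.
apply: (irr_sorted_eq ltn_trans ltnn) => // [|y]; first exact: sorted_enum_ord.
by apply/mapP/mapP => -[x x_in ->]; exists x; rewrite // ?mem_enum ?inE in x_in *.
Qed.

Lemma hsum_independent_sets (R : numDomainType) (N k : nat) (a : nat -> R) :
  (0 < N)%N ->
  hsum N k a =
  \sum_(A : {set 'I_(2 * N)} | cyclically_independent A && (#|A| == k))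
     \prod_(i in A) a i.+1.
Proof.
move=> N_gt0; have x0 : 'I_(2 * N) by exists 0%N; rewrite muln_gt0.
rewrite /hsum (eq_bigl _ _ (fun t => admissibleE t N_gt0)).
rewrite (eq_bigr (fun t : k.-tuple 'I_(2 * N) => \prod_(i in [set x in t]) a i.+1))
  => [|t /andP[sorted_t _]].
  rewrite (sum_sorted_tuples _ _ k x0 cyclically_independent (fun A => \prod_(i in A) a i.+1)).
  by apply: eq_bigl => A; rewrite andbC.
by rewrite big_uniq ?(sorted_tuple_uniq sorted_t) //; apply: eq_bigl => i; rewrite inE.
Qed.

(* h_{N+1}: the product of all sites, rotated by one site, pairs up along
   the product relations of the evolution. *)
Lemma full_product_invariant (R : comPzRingType) (N : nat) (abar a : nat -> R) :
  periodic N abar ->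
  (forall n : nat, (n < N)%N ->
     abar (2 * n)%N * abar (2 * n + 1)%N = a (2 * n + 1)%N * a (2 * n + 2)%N) ->
  \prod_(i < 2 * N) abar i.+1 = \prod_(i < 2 * N) a i.+1.
Proof.
move=> pb prod_rel.
have -> : \prod_(i < 2 * N) abar i.+1 = \prod_(i < 2 * N) abar i.
  rewrite [RHS](reindex_inj (@ordS_inj _)); apply: eq_bigr => i _.
  exact/esym/periodic_ordS.
rewrite (prod_pairs _ abar) (prod_pairs _ (fun i => a i.+1)); apply: eq_bigr => j _.
by rewrite -addn1 -addn2 -[(2 * j).+1]addn1 prod_rel.
Qed.

Theorem mainTheorem2 (R : realFieldType) (N : nat) (a abar : nat -> R) :
  (3 <= N)%N ->
  periodic N a -> periodic N abar ->
  (forall i : nat, 0 < a i) -> (forall i : nat, 0 < abar i) ->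
  (forall n : nat, (n < N)%N ->
     abar (2 * n + 2 * N - 1)%N + abar (2 * n)%N = a (2 * n)%N + a (2 * n + 1)%N /\
     abar (2 * n)%N * abar (2 * n + 1)%N = a (2 * n + 1)%N * a (2 * n + 2)%N) ->
  forall k : nat, (1 <= k <= N.+1)%N -> h N k abar = h N k a.
Proof.
move=> N_ge3 pa pb _ _ evolution k _.
have N_gt0 : (0 < N)%N by lia.
rewrite /h; case: eqP => _.
  by apply: full_product_invariant pb _ => n /evolution[].
rewrite !hsum_independent_sets // -!coef_transfer_trace //.
by rewrite (@transfer_trace_invariant R N a abar N_gt0 pa pb evolution).
Qed.
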